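(* Let $(\Gamma,\mathcal{G}_\Gamma)$ and $(\Sigma,\mathcal{G}_\Sigma)$ be labeled graphs whose vertex groups are all directly-indecomposable cyclic groups, and let $\phi:W(\Gamma)\to W(\Sigma)$ be a group isomorphism. Then the map $V_{\Gamma_A}\to W(\Sigma_A)$, $v\mapsto\rho_{\Sigma_A}(\phi(v))$, extends to a group isomorphism $W(\Gamma_A)\to W(\Sigma_A)$.
   Context: A labeled graph $(\Lambda,\mathcal{G}_\Lambda)$ consists of a nonempty finite simplicial graph $\Lambda$ with vertex set $V_\Lambda$ and a family $\mathcal{G}_\Lambda=\{G_v\}_{v\in V_\Lambda}$ of nontrivial groups. Its graph product $W(\Lambda)$ is the quotient of the free product $\ast_{v}G_v$ by the relations $gh=hg$ for $g\in G_v$, $h\in G_{v'}$ with $v,v'$ adjacent. For a full subgraph $\Theta$, $W(\Theta)$ denotes the subgroup generated by the images of $G_v$, $v\in V_\Theta$ (isomorphic to the graph product of the labeled subgraph). A cyclic group is directly-indecomposable if it is infinite or has prime-power order. For cyclic vertex groups, a generator of each $G_v$ is fixed and also denoted $v$. $\Lambda_T$ (resp. $\Lambda_A$) is the full subgraph of $\Lambda$ spanned by the vertices $v$ with $G_v$ finite (resp. infinite). $\rho_{\Sigma_A}:W(\Sigma)\to W(\Sigma_A)$ is the retraction homomorphism sending each $v\in V_{\Sigma_A}$ to $v$ and each $v\in V_{\Sigma_T}$ to $1$. *)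

From HB Require Import structures.
From mathcomp Require Import all_boot all_order all_algebra.
Set Implicit Arguments. Unset Strict Implicit. Unset Printing Implicit Defensive.
Import Order.TTheory GRing.Theory Num.Theory.

(* A labeled graph with cyclic vertex groups: vertex type, adjacency relation,
   and for each vertex v the order [lord v] of the cyclic group G_v
   (0 means G_v = Z, otherwise G_v = Z/(lord v)Z).  The fixed generator of
   G_v is the class of 1. *)
Record lgraph := LGraph { lv : finType; ladj : rel lv; lord : lv -> nat }.
Arguments ladj : clear implicits.
Arguments lord : clear implicits.

Definition wf_lgraph (G : lgraph) : Prop :=
  [/\ 0 < #|lv G|,
      (forall x y, ladj G x y = ladj G y x),
      (forall x, ~~ ladj G x x) &
      (forall x, lord G x <> 1)].

(* All vertex groups are directly-indecomposable cyclic groups: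
   infinite, or of prime-power order (> 1). *)
Definition dir_indec_cyclic (G : lgraph) : Prop :=
  forall x, lord G x = 0 \/ exists p k, prime p /\ 0 < k /\ lord G x = p ^ k.

(* Letters (v, k) stand for the element k * (generator) of G_v. *)
Definition word (G : lgraph) := seq (lv G * int).

(* Congruence on words defining W(G) = ( *_v G_v ) / << [G_v, G_w], v ~ w >>. *)
Inductive gp_eq (G : lgraph) : word G -> word G -> Prop :=
| gp_refl w : gp_eq w w
| gp_sym u w : gp_eq u w -> gp_eq w u
| gp_trans u w z : gp_eq u w -> gp_eq w z -> gp_eq u z
| gp_cat u1 u2 w1 w2 : gp_eq u1 u2 -> gp_eq w1 w2 -> gp_eq (u1 ++ w1) (u2 ++ w2)
| gp_merge v (a b : int) : gp_eq [:: (v, a); (v, b)] [:: (v, (a + b)%R)]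
| gp_triv v (k : int) : ((lord G v)%:Z %| k)%Z -> gp_eq [:: (v, k)] [::]
| gp_comm v w (a b : int) : ladj G v w -> gp_eq [:: (v, a); (w, b)] [:: (w, b); (v, a)].

Definition gp_hom (G H : lgraph) (f : word G -> word H) : Prop :=
  (forall u w, gp_eq u w -> gp_eq (f u) (f w)) /\
  (forall u w, gp_eq (f (u ++ w)) (f u ++ f w)).

Definition gp_iso (G H : lgraph) (f : word G -> word H) : Prop :=
  [/\ gp_hom f,
      (forall u w, gp_eq (f u) (f w) -> gp_eq u w) &
      (forall y, exists x, gp_eq (f x) y)].

Definition lsub (G : lgraph) (P : pred (lv G)) : lgraph :=
  @LGraph {x : lv G | P x} (fun x y => ladj G (val x) (val y))
          (fun x => lord G (val x)).

Definition infpart (G : lgraph) : pred (lv G) := fun x => lord G x == 0.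
Arguments infpart : clear implicits.
Definition lA (G : lgraph) : lgraph := lsub (infpart G).

Definition rhoA (G : lgraph) (w : word G) : word (lA G) :=
  flatten [seq (match @insub _ (infpart G) {x : lv G | infpart G x} x.1 with
                | Some y => [:: (y, x.2)]
                | None => [::]
                end) | x <- w].

From mathcomp Require Import all_boot all_order all_algebra zify.
From Stdlib Require Import Classical FunctionalExtensionality IndefiniteDescription.
Set Implicit Arguments. Unset Strict Implicit. Unset Printing Implicit Defensive.
Import GRing.Theory.

(* The key fact is that the right-angled Artin group W(Sig_A) is torsion
   free.  Each generator of a finite vertex group of Gam has finite order, so
   rho o phi kills it and therefore factors through the retraction of W(Gam)
   onto W(Gam_A); the same holds for phi^-1, and the two induced maps
   rho o phi o inc and rho o phi^-1 o inc are mutually inverse. *)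

Definition spow (T : Type) (s : seq T) n : seq T := flatten (nseq n s).

Lemma spow_seq1 (T : Type) (x : T) n : spow [:: x] n = nseq n x.
Proof. by rewrite /spow; elim: n => //= n ->. Qed.

Section WordGroup.
Variable G : lgraph.
Implicit Types (u w x y h g : word G) (v : lv G) (k : int).

Definition winv w : word G := rev (map (fun l => (l.1, - l.2)%R) w).
Definition wconj h g : word G := winv h ++ g ++ h.

Lemma gp_catl u1 u2 w : gp_eq u1 u2 -> gp_eq (u1 ++ w) (u2 ++ w).
Proof. by move=> H; apply: gp_cat => //; apply: gp_refl. Qed.

Lemma gp_catr u w1 w2 : gp_eq w1 w2 -> gp_eq (u ++ w1) (u ++ w2).
Proof. by move=> H; apply: gp_cat => //; apply: gp_refl. Qed.

Lemma gp_cons l u w : gp_eq u w -> gp_eq (l :: u) (l :: w).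
Proof. exact: (@gp_catr [:: l]). Qed.

Lemma gp_nil_catl u w : gp_eq u [::] -> gp_eq (u ++ w) w.
Proof. by move=> H; rewrite -[w in gp_eq _ w]cat0s; apply: gp_catl. Qed.

Lemma gp_zero v : gp_eq [:: (v, 0%R)] [::].
Proof. by apply: gp_triv; rewrite dvdz0. Qed.

Lemma gp_letter_pow v k n : gp_eq (spow [:: (v, k)] n) [:: (v, (k *+ n)%R)].
Proof.
elim: n => [|n IH] /=; first by rewrite mulr0n; apply: gp_sym; apply: gp_zero.
by apply: gp_trans (gp_cons _ IH) _; rewrite mulrS; apply: gp_merge.
Qed.

Lemma gp_letterV v k : gp_eq [:: (v, k); (v, - k)%R] [::].
Proof. by apply: gp_trans (gp_merge _ _ _) _; rewrite subrr; apply: gp_zero. Qed.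

Lemma gp_Vletter v k : gp_eq [:: (v, - k)%R; (v, k)] [::].
Proof. by apply: gp_trans (gp_merge _ _ _) _; rewrite addNr; apply: gp_zero. Qed.

Lemma winv_cat u w : winv (u ++ w) = winv w ++ winv u.
Proof. by rewrite /winv map_cat rev_cat. Qed.

Lemma winvK : involutive winv.
Proof.
move=> w; rewrite /winv map_rev revK -map_comp map_id_in //.
by case=> a b _ /=; rewrite opprK.
Qed.

Lemma gp_winvl w : gp_eq (winv w ++ w) [::].
Proof.
elim: w => [|[v k] w IH]; first exact: gp_refl.
rewrite (winv_cat [:: (v, k)]) -catA; apply: gp_trans IH; apply: gp_catr.
by rewrite /= -[w in gp_eq _ w]cat0s; apply: (@gp_catl [:: _; _]); apply: gp_Vletter.
Qed.

Lemma gp_winvr w : gp_eq (w ++ winv w) [::].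
Proof. by have := gp_winvl (winv w); rewrite winvK. Qed.

Lemma gp_cancell u w x : gp_eq (x ++ u) (x ++ w) -> gp_eq u w.
Proof.
move=> /(gp_catr (winv x)); rewrite !catA => H.
apply: gp_trans (gp_trans H _); last exact: gp_nil_catl (gp_winvl x).
by apply: gp_sym; apply: gp_nil_catl; apply: gp_winvl.
Qed.

Lemma gp_cancelr u w x : gp_eq (u ++ x) (w ++ x) -> gp_eq u w.
Proof.
move=> /(gp_catl (winv x)); rewrite -!catA => H.
apply: gp_trans (gp_trans H _).
  by rewrite -{1}[u]cats0; apply: gp_sym; apply: gp_catr; apply: gp_winvr.
by rewrite -{2}[w]cats0; apply: gp_catr; apply: gp_winvr.
Qed.

Lemma wconj_nil h g : gp_eq (wconj h g) [::] -> gp_eq g [::].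
Proof.
move=> H; apply: (@gp_cancell _ _ (winv h)); apply: (@gp_cancelr _ _ h).
by rewrite -catA cats0; apply: gp_trans H _; apply: gp_sym; apply: gp_winvl.
Qed.

Lemma wconj_cat h t g : wconj (h ++ t) g = wconj t (wconj h g).
Proof. by rewrite /wconj winv_cat -!catA. Qed.

Lemma wconj_congr h x y : gp_eq x y -> gp_eq (wconj h x) (wconj h y).
Proof. by move=> H; apply: gp_catr; apply: gp_catl. Qed.

Lemma spow_congr x y n : gp_eq x y -> gp_eq (spow x n) (spow y n).
Proof. by move=> H; elim: n => [|n IH]; [apply: gp_refl | apply: gp_cat]. Qed.

Lemma spow_conj h g n : gp_eq (spow (wconj h g) n) (wconj h (spow g n)).
Proof.
elim: n => [|n IH]; first by apply: gp_sym; apply: gp_winvl.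
apply: gp_trans (gp_catr _ IH) _; rewrite /wconj -!catA.
by apply: gp_catr; apply: (gp_catr g); rewrite catA; apply: gp_nil_catl; apply: gp_winvr.
Qed.

End WordGroup.

Lemma cat_eq_split (T : Type) (x1 y1 x2 y2 : seq T) : x1 ++ y1 = x2 ++ y2 ->
  exists m, (x1 = x2 ++ m /\ y2 = m ++ y1) \/ (x2 = x1 ++ m /\ y1 = m ++ y2).
Proof.
elim: x1 x2 => [|a x1 IH] [|b x2] /=.
- by move=> ->; exists [::]; left.
- by move=> ->; exists (b :: x2); right.
- by move=> <-; exists (a :: x1); left.
- by case=> -> /IH [m [[-> ->]|[-> ->]]]; exists m; [left|right].
Qed.

(* A signed letter (v, true) / (v, false) stands for the generator of
   G_v or its inverse.  The pile of a letter
   sequence r stores on each column the letters of r touching it, the last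
   one on top. *)
Section Piles.
Variable G : lgraph.

Definition letter := (lv G * bool)%type.
Definition column := (lv G * lv G)%type.
Implicit Types (v w : lv G) (a b : letter) (r s : seq letter) (c : column)
  (P Q : column -> seq letter).

Definition commuting v w : bool := [&& v != w, ladj G v w & ladj G w v].
Definition touches v c : bool := ~~ commuting c.1 c.2 && ((c.1 == v) || (c.2 == v)).
Definition pile r c : seq letter := [seq l <- rev r | touches l.1 c].
Definition linv a : letter := (a.1, ~~ a.2).
Definition reducible r : Prop := exists x y z a,
  r = x ++ a :: y ++ linv a :: z /\ all (fun l : letter => commuting a.1 l.1) y.

Definition can_pop P a : bool :=
  [forall c : column, touches a.1 c ==> (ohead (P c) == Some (linv a))].
Definition pile_act P a : column -> seq letter := fun c =>
  if touches a.1 c then (if can_pop P a then behead (P c) else a :: P c) else P c.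

Lemma linvK : involutive linv.
Proof. by case=> v b; rewrite /linv /= negbK. Qed.

Lemma commutingC v w : commuting v w = commuting w v.
Proof. by rewrite /commuting eq_sym [ladj G v w && _]andbC. Qed.

Lemma commuting_irr v : commuting v v = false.
Proof. by rewrite /commuting eqxx. Qed.

Lemma touches_diag v : touches v (v, v).
Proof. by rewrite /touches /= commuting_irr eqxx. Qed.

Lemma touches_pair v w : ~~ commuting v w -> touches v (v, w) && touches w (v, w).
Proof. by move=> H; rewrite /touches /= H !eqxx orbT. Qed.

Lemma touches_commuting v w c : commuting v w -> touches v c -> touches w c -> False.
Proof.
case: c => c1 c2; rewrite /touches /= => Hvw /andP [Hc /orP H1] /andP [_ /orP H2].
case: H1 H2 => /eqP E1 [] /eqP E2; subst.
- by rewrite commuting_irr in Hvw.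
- by rewrite Hvw in Hc.
- by rewrite commutingC Hvw in Hc.
- by rewrite commuting_irr in Hvw.
Qed.

Lemma pile_cat r s c : pile (r ++ s) c = pile s c ++ pile r c.
Proof. by rewrite /pile rev_cat filter_cat. Qed.

Lemma pile_rcons r a c :
  pile (rcons r a) c = if touches a.1 c then a :: pile r c else pile r c.
Proof. by rewrite -cats1 pile_cat /pile /=; case: (touches a.1 c). Qed.

Lemma pile_commuting v r c : all (fun l : letter => commuting v l.1) r ->
  touches v c -> pile r c = [::].
Proof.
move=> /allP H Ht; apply/eqP; rewrite -[_ == _]negbK -has_filter.
apply/hasP => -[l]; rewrite mem_rev => Hl; exact: touches_commuting (H l Hl) Ht.
Qed.

Lemma last_filter_split (p : pred letter) r q : ohead [seq l <- rev r | p l] = Some q ->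
  exists r1 r2, r = r1 ++ q :: r2 /\ all (predC p) r2.
Proof.
elim/last_ind: r => [|r l IH] //=; rewrite rev_rcons /=; case: ifP => Hl.
  by case=> <-; exists r, [::]; rewrite cats1.
move/IH => [r1 [r2 [-> Ha]]]; exists r1, (rcons r2 l).
by rewrite rcons_cat all_rcons /= Hl Ha.
Qed.

Lemma can_pop_split r a : can_pop (pile r) a ->
  exists r1 r2, r = r1 ++ linv a :: r2 /\ all (fun l : letter => commuting a.1 l.1) r2.
Proof.
move=> /forallP Hc; have := Hc (a.1, a.1); rewrite touches_diag /=.
move=> /eqP /last_filter_split [r1 [r2 [Er Ha]]]; exists r1, r2; split=> //.
apply/allP => l Hl; apply/negPn/negP => Hn; have /andP [T1 T2] := touches_pair Hn.
have := Hc (a.1, l.1); rewrite T1 Er -cat_rcons pile_cat => /eqP.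
have : l \in pile r2 (a.1, l.1) by rewrite mem_filter mem_rev Hl T2.
case E: (pile r2 (a.1, l.1)) => [|h t] //= _ [Eh].
have : h \in pile r2 (a.1, l.1) by rewrite E mem_head.
rewrite mem_filter mem_rev => /andP [_ Hh].
by move/allP: Ha => /(_ h Hh) /=; rewrite Eh touches_diag.
Qed.

Lemma split_can_pop b r1 r2 : all (fun l : letter => commuting b.1 l.1) r2 ->
  can_pop (pile (r1 ++ linv b :: r2)) b /\
  pile_act (pile (r1 ++ linv b :: r2)) b = pile (r1 ++ r2).
Proof.
move=> Ha.
have Etop c : touches b.1 c -> pile (r1 ++ linv b :: r2) c = linv b :: pile r1 c.
  by move=> Ht; rewrite -cat_rcons pile_cat pile_rcons (pile_commuting Ha Ht) /= Ht.
have Hcp : can_pop (pile (r1 ++ linv b :: r2)) b.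
  by apply/forallP => c; apply/implyP => Ht; rewrite Etop.
split=> //; apply: functional_extensionality => c.
rewrite /pile_act Hcp; case: ifP => Ht; first by rewrite Etop //= pile_cat (pile_commuting Ha Ht).
by rewrite -cat_rcons !pile_cat pile_rcons /= Ht.
Qed.

Lemma pile_act_push P a : ~~ can_pop P a ->
  pile_act P a = fun c => if touches a.1 c then a :: P c else P c.
Proof. by move=> /negbTE H; rewrite /pile_act H. Qed.

Lemma pile_act_rcons r a : ~~ can_pop (pile r) a -> pile_act (pile r) a = pile (rcons r a).
Proof. by move=> H; apply: functional_extensionality => c; rewrite pile_act_push // pile_rcons. Qed.

Lemma reducible_rcons r a : reducible r -> reducible (rcons r a).
Proof.
move=> [x [y [z [c [-> H]]]]]; exists x, y, (rcons z a), c.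
by rewrite !(rcons_cat, rcons_cons).
Qed.

Lemma reducible_ins r1 r2 b : reducible (r1 ++ r2) ->
  all (fun l : letter => commuting b.1 l.1) r2 -> reducible (r1 ++ b :: r2).
Proof.
move=> [x [y [z [c [E Hy]]]]] Hr2.
case/cat_eq_split: E => m [[E1 E2]|[E1 E2]]; subst; last first.
  by exists (r1 ++ b :: m), y, z, c; rewrite -!catA.
case: m E2 => [|c' m] /= E2.
  by subst r2; exists (x ++ [:: b]), y, z, c; rewrite cats0 -catA.
case: E2 => Ec /cat_eq_split [n [[Ey Er2]|[Em Ez]]]; subst c'.
  subst y; have Hcb : commuting c.1 b.1.
    by move/allP: Hr2 => /(_ (linv c)); rewrite Er2 mem_cat mem_head orbT commutingC; apply.
  exists x, (m ++ b :: n), z, c; split; first by rewrite Er2 -!catA.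
  by move: Hy; rewrite !all_cat /= Hcb.
subst m; case: n Ez => [|c2 n] /= Ez; last first.
  by case: Ez => <- _; exists x, y, (n ++ b :: r2), c; rewrite -catA /= -catA.
subst r2; exists x, (y ++ [:: b]), z, c; split; first by rewrite cats0 -!catA.
by move: Hr2 => /= /andP [Hc _]; rewrite all_cat Hy /= commutingC Hc.
Qed.

Lemma reducible_rcons_pop r a : can_pop (pile r) a -> reducible (rcons r a).
Proof.
move=> /can_pop_split [r1 [r2 [-> Ha]]]; exists r1, r2, [::], (linv a).
by rewrite linvK rcons_cat rcons_cons cats1.
Qed.

Lemma pile_act_reduced r a : ~ reducible r ->
  exists r', ~ reducible r' /\ pile_act (pile r) a = pile r'.
Proof.
move=> Hr; case Hc: (can_pop (pile r) a).
  have [r1 [r2 [Er Ha]]] := can_pop_split Hc.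
  exists (r1 ++ r2); split; last by rewrite Er; case: (split_can_pop r1 Ha).
  by move=> H; apply: Hr; rewrite Er; apply: reducible_ins.
exists (rcons r a); split; last by rewrite pile_act_rcons ?Hc.
move=> [x [y [z [c [E Hy]]]]]; case/lastP: z E => [|z l] E.
  have /rcons_inj [Er Ea] : rcons r a = rcons (x ++ c :: y) (linv c).
    by rewrite E cats1 -rcons_cons rcons_cat.
  subst a; by have [] := split_can_pop x (b := linv c) Hy; rewrite linvK -Er Hc.
have /rcons_inj [Er _] : rcons r a = rcons (x ++ c :: y ++ linv c :: z) l.
  by rewrite E !(rcons_cat, rcons_cons).
by apply: Hr; exists x, y, z, c.
Qed.

Lemma pile_actK r a : ~ reducible r -> pile_act (pile_act (pile r) a) (linv a) = pile r.
Proof.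
move=> Hr; case Hc: (can_pop (pile r) a); last first.
  rewrite pile_act_rcons ?Hc // -cats1 -{1}[a]linvK.
  by have [_ ->] := split_can_pop r (b := linv a) (isT : all _ [::]); rewrite cats0.
have [r1 [r2 [Er Ha]]] := can_pop_split Hc.
rewrite {1}Er; have [_ ->] := split_can_pop r1 Ha.
case Hc2: (can_pop (pile (r1 ++ r2)) (linv a)).
  case: (can_pop_split Hc2) => s1 [s2 []]; rewrite linvK => E2 Hs2.
  exfalso; apply: Hr; rewrite Er.
  case/cat_eq_split: E2 => m [[E1 E3]|[E1 E3]]; last first.
    by move: Ha; rewrite E3 all_cat /= commuting_irr andbF.
  case: m E1 E3 => [|c m] E1 E3.
    by move: Ha; rewrite /= in E3; rewrite -E3 /= commuting_irr.
  case: E3 => Ec E4; subst c s2 r1; exists s1, m, r2, a; split; first by rewrite -!catA.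
  by move: Hs2; rewrite all_cat => /andP [].
rewrite pile_act_rcons ?Hc2 // Er; apply: functional_extensionality => c.
rewrite -cat_rcons !pile_cat !pile_rcons pile_cat /linv /=.
by case: ifP => // Ht; rewrite (pile_commuting Ha Ht).
Qed.

Lemma can_pop_ext P Q a : (forall c, touches a.1 c -> P c = Q c) -> can_pop P a = can_pop Q a.
Proof. by move=> H; apply: eq_forallb => c; case Ht: (touches a.1 c) => //=; rewrite H. Qed.

(* Letters on commuting vertices act on disjoint sets of columns, hence
   their actions commute. *)
Lemma pile_act_comm P a b : commuting a.1 b.1 ->
  pile_act (pile_act P a) b = pile_act (pile_act P b) a.
Proof.
move=> Hab.
have Eb c : touches b.1 c -> pile_act P a c = P c.
  by move=> Hc; rewrite /pile_act; case: ifP => // Ha; case: (touches_commuting Hab Ha Hc).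
have Ea c : touches a.1 c -> pile_act P b c = P c.
  by move=> Hc; rewrite /pile_act; case: ifP => // Hb; case: (touches_commuting Hab Hc Hb).
apply: functional_extensionality => c; rewrite /pile_act (can_pop_ext Eb) (can_pop_ext Ea).
case Htb: (touches b.1 c); case Hta: (touches a.1 c) => //.
by case: (touches_commuting Hab Hta Htb).
Qed.

End Piles.

Section IntegerIteration.
Variables (X : Type) (f g : X -> X) (Inv : X -> Prop).

Definition iterz (k : int) (x : X) : X :=
  if (0 <= k)%R then iter (absz k) f x else iter (absz k) g x.

Hypotheses (Inv_f : forall x, Inv x -> Inv (f x)) (Inv_g : forall x, Inv x -> Inv (g x))
  (gfK : forall x, Inv x -> g (f x) = x) (fgK : forall x, Inv x -> f (g x) = x).

Lemma iter_Inv h n x : (forall y, Inv y -> Inv (h y)) -> Inv x -> Inv (iter n h x).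
Proof. by move=> H; elim: n => //= n IH Hx; apply/H/IH. Qed.

Lemma iterz_Inv k x : Inv x -> Inv (iterz k x).
Proof. by rewrite /iterz; case: ifP => _; apply: iter_Inv. Qed.

Lemma iterzN (n : nat) x : iterz (- n%:Z) x = iter n g x.
Proof. by case: n. Qed.

Lemma iterzS k x : Inv x -> iterz (k + 1) x = f (iterz k x).
Proof.
move=> Hx; elim/int_rec: k => [|n _|n _] //; first by rewrite -PoszD addn1.
have -> : (- n.+1%:Z + 1 = - n%:Z :> int)%R by rewrite -addn1 PoszD opprD addrNK.
by rewrite !iterzN /= fgK //; apply: iter_Inv.
Qed.

Lemma iterzP k x : Inv x -> iterz (k - 1) x = g (iterz k x).
Proof. by move=> Hx; rewrite -{2}[k](subrK 1%R) iterzS // gfK //; apply: iterz_Inv. Qed.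

Lemma iterzD a b x : Inv x -> iterz b (iterz a x) = iterz (a + b) x.
Proof.
move=> Hx; elim/int_rec: b => [|n IH|n IH]; first by rewrite addr0.
  rewrite -[in LHS]addn1 PoszD iterzS; last exact: iterz_Inv.
  by rewrite IH -iterzS // -addn1 PoszD addrA.
rewrite -[in LHS]addn1 PoszD opprD iterzP; last exact: iterz_Inv.
by rewrite IH -iterzP // -addn1 PoszD opprD addrA.
Qed.

Lemma iter_comm (F H : X -> X) : (forall x, F (H x) = H (F x)) ->
  forall n m x, iter n F (iter m H x) = iter m H (iter n F x).
Proof.
move=> C n m x; have E k y : iter k F (H y) = H (iter k F y) by elim: k => //= k ->; rewrite C.
by elim: m => //= m <-; rewrite E.
Qed.
End IntegerIteration.

Lemma iterz_comm (X : Type) (f1 g1 f2 g2 : X -> X) :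
  (forall x, f1 (f2 x) = f2 (f1 x)) -> (forall x, f1 (g2 x) = g2 (f1 x)) ->
  (forall x, g1 (f2 x) = f2 (g1 x)) -> (forall x, g1 (g2 x) = g2 (g1 x)) ->
  forall a b x, iterz f1 g1 a (iterz f2 g2 b x) = iterz f2 g2 b (iterz f1 g1 a x).
Proof. by move=> C1 C2 C3 C4 a b x; rewrite /iterz; do 2 case: ifP => _; apply: iter_comm. Qed.

Definition right_angled (G : lgraph) : Prop :=
  [/\ forall x, lord G x = 0, forall x y, ladj G x y = ladj G y x & forall x, ~~ ladj G x x].

(* The word problem in a right-angled Artin group: a word acts on piles of
   reduced sequences, equal words act in the same way, and a reduced
   sequence acts on the empty pile by building its own pile. *)
Section WordProblem.
Variable G : lgraph.
Hypothesis RA : right_angled G.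
Implicit Types (P : column G -> seq (letter G)) (e r : seq (letter G)).

Definition sgn (b : bool) : int := if b then 1%R else (-1)%R.
Definition word_of e : word G := map (fun a => (a.1, sgn a.2)) e.

Definition letter_act P (l : lv G * int) : column G -> seq (letter G) :=
  iterz (fun Q => pile_act Q (l.1, true)) (fun Q => pile_act Q (l.1, false)) l.2 P.
Definition run (w : word G) P : column G -> seq (letter G) := foldl letter_act P w.
Definition reduced_pile P : Prop := exists r, ~ reducible r /\ P = pile r.

(* Letters act by bijections on piles of reduced sequences, so integer
   powers of generators act additively. *)
Lemma reduced_pile_act P a : reduced_pile P -> reduced_pile (pile_act P a).
Proof. by move=> [r [Hr ->]]; have [r' [H1 H2]] := pile_act_reduced a Hr; exists r'. Qed.

Lemma reduced_pile_actK P a : reduced_pile P -> pile_act (pile_act P a) (linv a) = P.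
Proof. by move=> [r [Hr ->]]; apply: pile_actK. Qed.

Lemma reduced_pile_letter_act P l : reduced_pile P -> reduced_pile (letter_act P l).
Proof. by move=> H; apply: (iterz_Inv (Inv := reduced_pile)) => // Q; apply: reduced_pile_act. Qed.

Lemma letter_actD P v a b : reduced_pile P ->
  letter_act (letter_act P (v, a)) (v, b) = letter_act P (v, (a + b)%R).
Proof.
move=> H; apply: (iterzD (Inv := reduced_pile)) => // Q HQ;
  by [apply: reduced_pile_act | apply: (reduced_pile_actK (v, true))
      | apply: (reduced_pile_actK (v, false))].
Qed.

Lemma reduced_pile_run w P : reduced_pile P -> reduced_pile (run w P).
Proof. by elim: w P => //= l w IH P H; apply/IH/reduced_pile_letter_act. Qed.

Lemma run_cat u w P : run (u ++ w) P = run w (run u P).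
Proof. by rewrite /run foldl_cat. Qed.

Lemma run_gp_eq u w : gp_eq u w -> forall P, reduced_pile P -> run u P = run w P.
Proof.
case: RA => Hord Hsym Hirr; elim=> {u w}.
- by [].
- by move=> u w _ IH P H; rewrite IH.
- by move=> u w z _ IH1 _ IH2 P H; rewrite IH1 // IH2.
- by move=> u1 u2 w1 w2 _ IH1 _ IH2 P H; rewrite !run_cat IH1 // IH2 //; apply: reduced_pile_run.
- by move=> v a b P H; rewrite /run /= letter_actD.
- by move=> v k; rewrite Hord dvd0z => /eqP ->.
- move=> v w a b Hadj P H; rewrite /run /= /letter_act /=.
  have Hvw : commuting v w.
    rewrite /commuting Hadj -Hsym Hadj !andbT.
    by apply: contraTneq Hadj => <-; apply: Hirr.
  by apply: iterz_comm => Q; apply: (pile_act_comm Q (a := (_, _)) (b := (_, _))).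
Qed.

Lemma reduced_pile_nil : reduced_pile (pile [::]).
Proof. by exists [::]; split=> // -[[|? ?] [? [? [? []]]]]. Qed.

Lemma run_word_of e : ~ reducible e -> run (word_of e) (pile [::]) = pile e.
Proof.
elim/last_ind: e => [|e a IH] He //.
have He' : ~ reducible e by move=> H; apply/He/reducible_rcons.
rewrite /word_of map_rcons -/(word_of e) /run foldl_rcons -/(run _ _) IH //.
have -> : letter_act (pile e) (a.1, sgn a.2) = pile_act (pile e) a by case: a {He} => v [].
apply: pile_act_rcons; apply/negP => /reducible_rcons_pop; exact: He.
Qed.

Theorem word_problem e : ~ reducible e -> e <> [::] -> ~ gp_eq (word_of e) [::].
Proof.
move=> Hr Hne /run_gp_eq /(_ _ reduced_pile_nil); rewrite run_word_of //=.
case: e Hr Hne => [|a e] // _ _ /(congr1 (fun P => P (a.1, a.1))).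
rewrite /pile /= filter_rev => E.
have : a \in [seq l <- a :: e | touches l.1 (a.1, a.1)] by rewrite mem_filter touches_diag mem_head.
by rewrite -mem_rev E.
Qed.

End WordProblem.

Lemma size_spow (T : Type) (e : seq T) n : size (spow e n) = n * size e.
Proof. by elim: n => //= n IH; rewrite size_cat IH mulSn. Qed.

Lemma nth_spow (T : Type) (d : T) e n m : m < n * size e ->
  nth d (spow e n) m = nth d e (m %% size e).
Proof.
elim: n m => [|n IH] m //= Hm; rewrite nth_cat; case: ifP => H1; first by rewrite modn_small.
have H2 : size e <= m by rewrite leqNgt H1.
by rewrite IH; [rewrite -{2}(subnK H2) modnDr | rewrite ltn_subLR // -mulSn].
Qed.

Lemma nth_rot (T : Type) (d : T) e k t : k <= size e -> t < size e ->
  nth d (rot k e) t = nth d e ((k + t) %% size e).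
Proof.
move=> Hk Ht; have -> : nth d e ((k + t) %% size e) = nth d (e ++ e) (k + t).
  have -> : e ++ e = spow e 2 by rewrite /spow /= cats0.
  by rewrite nth_spow //; lia.
rewrite /rot !nth_cat size_drop; case: ifP => H.
  by rewrite nth_drop; have -> : (k + t < size e) = true by lia.
rewrite nth_take; last by lia.
have -> : (k + t < size e) = false by lia.
by congr nth; lia.
Qed.

Section CancellingPairs.
Variable G : lgraph.
Implicit Types (r e : seq (letter G)) (d : letter G).

Definition cancels_at d r i j : Prop :=
  [/\ i < j < size r, nth d r j = linv (nth d r i) &
      forall t, i < t < j -> commuting (nth d r i).1 (nth d r t).1].

Lemma reducible_cancels d r : reducible r -> exists i j, cancels_at d r i j.
Proof.
move=> [x [y [z [a [-> Hy]]]]]; exists (size x), (size x + (size y).+1).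
have Ew t : nth d (x ++ a :: y ++ linv a :: z) (size x + t) = nth d (a :: y ++ linv a :: z) t.
  by rewrite nth_cat ltnNge leq_addr addKn.
have Ea : nth d (x ++ a :: y ++ linv a :: z) (size x) = a by rewrite nth_cat ltnn subnn.
split; first by rewrite size_cat /= size_cat /=; lia.
  by rewrite Ea Ew /= nth_cat ltnn subnn.
move=> t /andP [Ht1 Ht2]; rewrite Ea; have -> : t = size x + (t - size x) by lia.
rewrite Ew; case Et: (t - size x) => [|s]; first by lia.
have Hs : s < size y by lia.
by rewrite /= nth_cat Hs; move/allP: Hy; apply; apply: mem_nth.
Qed.

Lemma cancels_reducible d r i j : cancels_at d r i j -> reducible r.
Proof.
case=> /andP [Hij Hj] Ej Hc.
exists (take i r), (take (j - i.+1) (drop i.+1 r)), (drop j.+1 r), (nth d r i); split.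
  rewrite -{1}(cat_take_drop i r) (drop_nth d) ?(ltn_trans Hij) //; congr (_ ++ _ :: _).
  rewrite -{1}(cat_take_drop (j - i.+1) (drop i.+1 r)) drop_drop subnK //.
  by rewrite (drop_nth d Hj) Ej.
have Hsz : j - i.+1 <= size (drop i.+1 r) by rewrite size_drop; lia.
apply/allP => l /(nthP d) [t]; rewrite size_takel // => Ht <-.
by rewrite nth_take // nth_drop; apply: Hc; lia.
Qed.

Lemma linv_neq d : linv d != d.
Proof. by case: d => v b; rewrite /linv xpair_eqE eqxx; case: b. Qed.

(* If a power of e is reducible, then so is some rotation of e: a cancelling
   pair of spow e n is at distance less than size e, since the letter at
   distance size e is a copy of the first one. *)
Lemma reducible_spow e n : reducible (spow e n) -> exists k, reducible (rot k e).
Proof.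
move=> Hred; case: (Hred) => _ [_ [_ [d _]]].
have [i [j [/andP [Hij Hj] Ej Hc]]] := reducible_cancels d Hred.
set E := spow e n in Hred Hj Ej Hc; set p := size e.
have Hper m : m < size E -> nth d E m = nth d e (m %% p).
  by move=> Hm; apply: nth_spow; rewrite -size_spow.
have p0 : 0 < p by move: Hj; rewrite size_spow /p; case: (size e) => //; rewrite muln0.
have Hji : j < i + p.
  rewrite ltnNge; apply/negP => Hle.
  have Eip : nth d E (i + p) = nth d E i by rewrite !Hper ?modnDr //; lia.
  move: Hle; rewrite leq_eqVlt => /orP [/eqP Eq|Hlt].
    by move: (linv_neq (nth d E i)); rewrite -Ej -Eq Eip eqxx.
  have := Hc (i + p); rewrite Eip commuting_irr => H; suff : false by []; apply: H; lia.
have Hrot t : t <= j - i -> nth d (rot (i %% p) e) t = nth d E (i + t).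
  move=> Ht; have Hk : i %% p <= size e by rewrite ltnW // ltn_pmod.
  rewrite nth_rot // -/p; last by lia.
  by rewrite modnDml Hper //; lia.
exists (i %% p); apply: (cancels_reducible (d := d) (i := 0) (j := j - i)); split.
- by rewrite size_rot -/p; lia.
- by rewrite !Hrot // addn0 subnKC // ltnW.
- by move=> t Ht; rewrite !Hrot ?addn0; [apply: Hc | ..]; lia.
Qed.


End CancellingPairs.

(* Every element is conjugate
   to the word of a cyclically reduced letter sequence e (no rotation of e is
   reducible): cancelling a pair in a rotation shortens the sequence.  Then
   every power of e is reduced, hence nontrivial by the word problem. *)
Section TorsionFree.
Variable G : lgraph.
Hypothesis RA : right_angled G.
Implicit Types (e : seq (letter G)) (g h : word G).

Lemma word_of_cat e1 e2 : word_of (e1 ++ e2) = word_of e1 ++ word_of e2.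
Proof. exact: map_cat. Qed.

Lemma word_of_spow e n : word_of (spow e n) = spow (word_of e) n.
Proof. by rewrite /word_of map_flatten map_nseq. Qed.

Lemma word_of_onto g : exists e, gp_eq (word_of e) g.
Proof.
elim: g => [|[v k] g [e IH]]; first by exists [::]; apply: gp_refl.
have Hpow b m : gp_eq (word_of (nseq m (v, b))) [:: (v, (sgn b *+ m)%R)].
  by rewrite /word_of map_nseq -spow_seq1; apply: gp_letter_pow.
have [e1 H1] : exists e1, gp_eq (word_of e1) [:: (v, k)].
  case: k => m; first by exists (nseq m (v, true)); have := Hpow true m; rewrite /sgn natz.
  by exists (nseq m.+1 (v, false)); have := Hpow false m.+1; rewrite /sgn mulNrn natz -NegzE.
exists (e1 ++ e); rewrite word_of_cat; exact: (@gp_cat _ _ [:: (v, k)] _ g H1 IH).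
Qed.

Lemma gp_commute_past v k e : all (fun l : letter G => commuting v l.1) e ->
  gp_eq ((v, k) :: word_of e) (word_of e ++ [:: (v, k)]).
Proof.
elim: e => [|l e IH] /=; first by move=> _; apply: gp_refl.
case/andP => /and3P [_ Hadj _] He.
apply: gp_trans (gp_cons _ (IH He)).
exact: (@gp_catl _ [:: (v, k); (l.1, sgn l.2)] [:: (l.1, sgn l.2); (v, k)] _ (gp_comm _ _ Hadj)).
Qed.

Lemma reducible_shorten e : reducible e ->
  exists e', size e' < size e /\ gp_eq (word_of e) (word_of e').
Proof.
move=> [x [y [z [a [-> Hy]]]]]; exists (x ++ y ++ z); split.
  by rewrite !size_cat /= size_cat /=; lia.
rewrite !word_of_cat /= word_of_cat /=; apply: gp_catr.
have -> : sgn (~~ a.2) = (- sgn a.2)%R by case: a.2.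
set l := (a.1, sgn a.2); set l' := (a.1, - sgn a.2)%R.
apply: gp_trans (_ : gp_eq ((word_of y ++ [:: l]) ++ l' :: word_of z) _).
  exact: (@gp_catl _ (l :: word_of y) _ (l' :: word_of z) (gp_commute_past _ Hy)).
rewrite -catA; apply: gp_catr.
exact: (@gp_catl _ [:: l; l'] [::] _ (gp_letterV _ _)).
Qed.

Lemma word_of_rot e k : gp_eq (word_of (rot k e)) (wconj (take k (word_of e)) (word_of e)).
Proof.
rewrite /word_of map_rot -/(word_of e) /rot /wconj.
rewrite -[X in gp_eq _ (_ ++ X ++ _)](cat_take_drop k (word_of e)) -!catA.
by apply: gp_sym; rewrite catA; apply: gp_nil_catl; apply: gp_winvl.
Qed.

Lemma cyclically_reduced_power g h e n : 0 < n -> e <> [::] ->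
  (forall k, ~ reducible (rot k e)) -> gp_eq (word_of e) (wconj h g) ->
  ~ gp_eq (spow g n) [::].
Proof.
move=> n0 He Hcyc Heg Hg.
have Hred : ~ reducible (spow e n) by move=> /reducible_spow [k]; apply: Hcyc.
have Hne : spow e n <> [::].
  by move=> /(congr1 size) /eqP; rewrite size_spow muln_eq0 size_eq0 gtn_eqF //= => /eqP.
apply: (word_problem RA Hred Hne); rewrite word_of_spow.
apply: gp_trans (spow_congr n Heg) _; apply: gp_trans (spow_conj _ _ _) _.
by apply: gp_trans (wconj_congr h Hg) _; apply: gp_winvl.
Qed.

(* Torsion freeness, by induction on the length of a letter sequence
   representing a conjugate of g. *)
Theorem torsion_free g n : 0 < n -> gp_eq (spow g n) [::] -> gp_eq g [::].
Proof.
move=> n0 Hg; have [e0 He0] := word_of_onto g.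
suff IH m : forall e h, size e <= m -> gp_eq (word_of e) (wconj h g) -> gp_eq g [::].
  by apply: (IH _ e0 [::]) => //; rewrite /wconj cats0.
elim: m => [|m IH] e h Hs He.
  by move: Hs; rewrite leqn0 => /nilP Ee; subst e; apply: (@wconj_nil _ h); apply: gp_sym.
case: (classic (exists k, reducible (rot k e))) => [[k Hk]|Hcyc].
  have [e' [Hs' He']] := reducible_shorten Hk; rewrite size_rot in Hs'.
  apply: (IH e' (h ++ take k (word_of e))); first by lia.
  rewrite wconj_cat; apply: gp_trans (gp_sym He') _.
  by apply: gp_trans (word_of_rot _ _) _; apply: wconj_congr.
case: e Hs He Hcyc => [|a e] Hs He Hcyc.
  by apply: (@wconj_nil _ h); apply: gp_sym.
exfalso; apply: (cyclically_reduced_power n0 _ _ He Hg) => // k Hk.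
by apply: Hcyc; exists k.
Qed.

End TorsionFree.

Section Retraction.
Variable G : lgraph.
Implicit Types (u w : word G) (v : lv G) (k : int).

Definition incA (u : word (lA G)) : word G := map (fun l => (val l.1, l.2)) u.

Lemma rhoA_cat u w : rhoA (u ++ w) = rhoA u ++ rhoA w.
Proof. by rewrite /rhoA map_cat flatten_cat. Qed.

Lemma incA_cat (u w : word (lA G)) : incA (u ++ w) = incA u ++ incA w.
Proof. exact: map_cat. Qed.

Lemma rhoA_in v k : infpart G v -> incA (rhoA [:: (v, k)]) = [:: (v, k)].
Proof. by move=> Hv; rewrite /rhoA /=; case: insubP => [y _ Ey|] /=; rewrite ?Ey ?Hv. Qed.

Lemma rhoA_out v k : ~~ infpart G v -> rhoA [:: (v, k)] = [::].
Proof. by move=> Hv; rewrite /rhoA /=; case: insubP => [y Hy _|] //=; rewrite Hy in Hv. Qed.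

Lemma rhoA_incA (u : word (lA G)) : rhoA (incA u) = u.
Proof. by elim: u => [|[y k] u IH] //=; rewrite (rhoA_cat [:: _]) IH /rhoA /= valK. Qed.

Lemma rhoA_gp_eq u w : gp_eq u w -> gp_eq (rhoA u) (rhoA w).
Proof.
elim=> {u w}; try by move=> *; apply: gp_refl.
- by move=> u w _; apply: gp_sym.
- by move=> u w z _ H1 _; apply: gp_trans H1.
- by move=> u1 u2 w1 w2 _ H1 _ H2; rewrite !rhoA_cat; apply: gp_cat.
- move=> v a b; rewrite /rhoA /=.
  by case: insubP => [y _ _|_] /=; [apply: gp_merge | apply: gp_refl].
- move=> v k Hk; rewrite /rhoA /=; case: insubP => [y _ Ey|] /=; last by move=> _; apply: gp_refl.
  by apply: gp_triv; rewrite /= Ey.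
- move=> v w a b Hadj; rewrite /rhoA /=.
  case: insubP => [y _ Ey|_]; case: insubP => [y' _ Ey'|_] /=; try exact: gp_refl.
  by apply: gp_comm; rewrite /= Ey Ey'.
Qed.

Lemma incA_gp_eq (u w : word (lA G)) : gp_eq u w -> gp_eq (incA u) (incA w).
Proof.
elim=> {u w}.
- by move=> w; apply: gp_refl.
- by move=> u w _; apply: gp_sym.
- by move=> u w z _ H1 _; apply: gp_trans H1.
- by move=> u1 u2 w1 w2 _ H1 _ H2; rewrite !incA_cat; apply: gp_cat.
- by move=> v a b; apply: gp_merge.
- by move=> v k Hk; apply: gp_triv.
- by move=> v w a b Hadj; apply: gp_comm.
Qed.

Lemma lA_right_angled : wf_lgraph G -> right_angled (lA G).
Proof. by case=> _ Hsym Hirr _; split=> [[x /eqP]|[x _] [y _]|[x _]] //=; rewrite Hsym. Qed.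

End Retraction.

Section Homomorphisms.
Variables G H : lgraph.
Implicit Types (f : word G -> word H).

Lemma gp_hom_nil f : gp_hom f -> gp_eq (f [::]) [::].
Proof.
case=> _ Hcat; apply: gp_sym; apply: (@gp_cancell _ [::] (f [::]) (f [::])).
by have := Hcat [::] [::]; rewrite !cats0.
Qed.

Lemma gp_hom_spow f x n : gp_hom f -> gp_eq (f (spow x n)) (spow (f x) n).
Proof.
move=> Hf; elim: n => [|n IH]; first exact: gp_hom_nil.
by apply: gp_trans (Hf.2 _ _) _; apply: gp_catr.
Qed.

Lemma gp_hom_rhoA f : gp_hom f -> gp_hom (fun x => rhoA (f x)).
Proof.
case=> Hf Hcat; split=> [u w /Hf /rhoA_gp_eq //|u w].
by rewrite -rhoA_cat; apply: rhoA_gp_eq.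
Qed.

(* A homomorphism to a right-angled Artin group kills every finite vertex
   group, since these are generated by torsion elements. *)
Lemma gp_hom_kills_finite f : right_angled H -> gp_hom f ->
  forall v k, ~~ infpart G v -> gp_eq (f [:: (v, k)]) [::].
Proof.
move=> RA Hf v k Hv; have n0 : 0 < lord G v by rewrite lt0n.
apply: (torsion_free RA n0); apply: gp_trans (gp_sym (gp_hom_spow _ _ Hf)) _.
apply: gp_trans (gp_hom_nil Hf); apply: Hf.1; apply: gp_trans (gp_letter_pow _ _ _) _.
by apply: gp_triv; rewrite -mulr_natr natz dvdz_mull.
Qed.

Lemma gp_hom_factor f : gp_hom f ->
  (forall v k, ~~ infpart G v -> gp_eq (f [:: (v, k)]) [::]) ->
  forall w, gp_eq (f w) (f (incA (rhoA w))).
Proof.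
move=> Hf Hkill; elim=> [|[v k] w IH]; first exact: gp_refl.
apply: gp_trans (Hf.2 [:: (v, k)] w) _; rewrite (rhoA_cat [:: _]) incA_cat.
case Hv: (infpart G v).
  by rewrite rhoA_in //; apply: gp_trans (gp_sym (Hf.2 _ _)); apply: gp_catr.
rewrite rhoA_out ?Hv //=; apply: gp_trans IH; apply: gp_nil_catl.
by apply: Hkill; rewrite Hv.
Qed.

Lemma gp_iso_inverse f : gp_iso f -> exists g : word H -> word G,
  [/\ gp_hom g, forall y, gp_eq (f (g y)) y & forall x, gp_eq (g (f x)) x].
Proof.
case=> [[Hf Hcat] Hinj Hsurj].
have [g Hfg] : exists g : word H -> word G, forall y, gp_eq (f (g y)) y.
  exists (fun y => proj1_sig (constructive_indefinite_description _ (Hsurj y))) => y.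
  by case: constructive_indefinite_description.
exists g; split=> // [|x]; last exact/Hinj/Hfg.
split=> [u w E|u w]; apply: Hinj; apply: gp_trans (Hfg _) _.
  by apply: gp_trans E (gp_sym (Hfg w)).
by apply: gp_sym; apply: gp_trans (Hcat _ _) _; apply: gp_cat.
Qed.

End Homomorphisms.

(* Mutually inverse homomorphisms f, g between W(G) and W(H) induce mutually
   inverse homomorphisms rho o f o inc and rho o g o inc between W(G_A) and
   W(H_A), because rho o f and rho o g factor through the retractions. *)
Lemma induced_iso (G H : lgraph) (f : word G -> word H) (g : word H -> word G) :
  wf_lgraph G -> wf_lgraph H -> gp_hom f -> gp_hom g ->
  (forall y, gp_eq (f (g y)) y) -> (forall x, gp_eq (g (f x)) x) ->
  gp_iso (fun u : word (lA G) => rhoA (f (incA u))).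
Proof.
move=> wfG wfH Hf Hg Hfg Hgf.
have Hrf := gp_hom_rhoA Hf; have Hrg := gp_hom_rhoA Hg.
have Ff := gp_hom_factor Hrf (gp_hom_kills_finite (lA_right_angled wfH) Hrf).
have Fg := gp_hom_factor Hrg (gp_hom_kills_finite (lA_right_angled wfG) Hrg).
have Hback u : gp_eq (rhoA (g (incA (rhoA (f (incA u)))))) u.
  apply: gp_trans (gp_sym (Fg (f (incA u)))) _.
  by rewrite -[u in gp_eq _ u]rhoA_incA; apply: rhoA_gp_eq.
split.
- split=> [u w E|u w]; first by apply: Hrf.1; apply: incA_gp_eq.
  by rewrite incA_cat; apply: Hrf.2.
- move=> u w E; apply: gp_trans (gp_sym (Hback u)) (gp_trans _ (Hback w)).
  by apply: Hrg.1; apply: incA_gp_eq.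
- move=> y; exists (rhoA (g (incA y))); apply: gp_trans (gp_sym (Ff _)) _.
  by rewrite -[y in gp_eq _ y]rhoA_incA; apply: rhoA_gp_eq.
Qed.

Theorem lemma5p1 (Gam Sig : lgraph)
  (wfG : wf_lgraph Gam) (wfS : wf_lgraph Sig)
  (dG : dir_indec_cyclic Gam) (dS : dir_indec_cyclic Sig)
  (phi : word Gam -> word Sig) (hphi : gp_iso phi) :
  exists psi : word (lA Gam) -> word (lA Sig),
    gp_iso psi /\
    forall v : lv (lA Gam),
      gp_eq (psi [:: (v, 1%Z)]) (rhoA (phi [:: (val v, 1%Z)])).
Proof.
have [phi' [Hphi' Hpp' Hp'p]] := gp_iso_inverse hphi.
have [Hphi _ _] := hphi.
exists (fun u => rhoA (phi (incA u))); split; last by move=> v; apply: gp_refl.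
exact: (induced_iso wfG wfS Hphi Hphi' Hpp' Hp'p).
Qed.
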